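(* Let $k, m \in \mathbb N$ with $k \ge 2$, and let $\phi \colon \mathcal H_{2k}^0 \to M_m$ be a real linear map with $\phi(\mathcal{IH}_{2k}^0) \subset \mathcal U_m$. Let $H \in \mathcal{IH}_{2(k-2)}^0$, $K \in \mathcal H_2\cap\mathcal U_2$, $Z \in \mathcal U_2$, $T \in M_{2(k-1),2}$ and $V \in M_{2(k-1),2(k-2)}$ be such that the block matrix $\begin{bmatrix} V & T\end{bmatrix} \in \mathcal U_{2(k-1)}$. Then $$\left|\phi\!\left(\begin{bmatrix} & TZ \\ Z^\ast T^\ast & \end{bmatrix}\right)\right|^2 = \left|\phi\!\left(TKT^\ast \oplus (-Z^\ast K Z)\right)\right|^2 = I_m - \left|\phi\!\left(VHV^\ast \oplus 0_2\right)\right|^2$$ and $$\operatorname{Re}\!\left(\phi\!\left(TKT^\ast \oplus (-Z^\ast KZ)\right)^\ast\, \phi\!\left(\begin{bmatrix} & TZ \\ Z^\ast T^\ast & \end{bmatrix}\right)\right) = 0_m.$$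
   Context: $M_{p,q}$ is the set of $p\times q$ complex matrices, $M_m = M_{m,m}$, $\mathcal U_n$ the $n\times n$ unitary matrices, $\mathcal H_n$ the $n\times n$ complex hermitian matrices, $\mathcal H_n^0$ the trace-zero ones, $\mathcal{IH}_n^0 = \mathcal H_n^0\cap\mathcal U_n$ (for $n=0$ these are the empty matrices). The block matrix $\begin{bmatrix} & TZ \\ Z^\ast T^\ast & \end{bmatrix}$ is the $2k\times 2k$ matrix with zero diagonal blocks of sizes $2(k-1)$ and $2$. $|A| = (A^\ast A)^{1/2}$, $\operatorname{Re}A = \tfrac12(A+A^\ast)$, $\oplus$ is block-diagonal sum. *)

From HB Require Import structures.
From mathcomp Require Import all_boot all_order all_algebra.
From mathcomp Require Import reals.
From mathcomp Require Import complex.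
Set Implicit Arguments. Unset Strict Implicit. Unset Printing Implicit Defensive.
Import Order.TTheory GRing.Theory Num.Theory.
Local Open Scope ring_scope.

Section MatrixDefs.
Variable C : numClosedFieldType.

Definition cmx_adj {p q} (A : 'M[C]_(p, q)) : 'M[C]_(q, p) :=
  (map_mx Num.conj A)^T.

Definition cmx_hermitian {n} (A : 'M[C]_n) : Prop := cmx_adj A = A.

(* Stated for a p x q matrix so that
   block matrices whose dimensions are only propositionally equal can be used;
   it forces p = q (rank argument) and for square matrices it is the usual
   notion. *)
Definition cmx_unitary {p q} (A : 'M[C]_(p, q)) : Prop :=
  A *m cmx_adj A = 1%:M /\ cmx_adj A *m A = 1%:M.

Definition cmx_herm0 {n} (A : 'M[C]_n) : Prop := cmx_hermitian A /\ \tr A = 0.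

Definition cmx_iherm0 {n} (A : 'M[C]_n) : Prop := cmx_herm0 A /\ cmx_unitary A.

(* |A|^2 = ((adj(A) A)^{1/2})^2 = adj(A) A *)
Definition cmx_sqabs {p q} (A : 'M[C]_(p, q)) : 'M[C]_q := cmx_adj A *m A.

Definition cmx_Re {n} (A : 'M[C]_n) : 'M[C]_n := 2^-1 *: (A + cmx_adj A).

Definition cmx_real_linear_on_herm0 {n m} (phi : 'M[C]_n -> 'M[C]_m) : Prop :=
  forall (a b : C) (X Y : 'M[C]_n), a \is Num.real -> b \is Num.real ->
    cmx_herm0 X -> cmx_herm0 Y -> phi (a *: X + b *: Y) = a *: phi X + b *: phi Y.

End MatrixDefs.

From HB Require Import structures.
From mathcomp Require Import all_boot all_order all_algebra.
From mathcomp Require Import reals.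
From mathcomp Require Import complex.
From mathcomp Require Import ring.

Set Implicit Arguments.
Unset Strict Implicit.
Unset Printing Implicit Defensive.
Import Order.TTheory GRing.Theory Num.Theory.
Local Open Scope ring_scope.

(* For real s, t with s^2 + t^2 = 1 the matrix X = E + s D + t B is hermitian,
   trace-free and involutive: conjugated by the unitary [V T] (+) Z^* it becomes
   H (+) [[s K, t], [t, -s K]].  Hence
   phi X = phi E + s phi D + t phi B is unitary, i.e. |phi E + s phi D + t phi B|^2 = I
   on the whole unit circle.  This is a quadratic form in (s, t); the points
   (+-1, 0) and (0, +-1) give |phi D|^2 = |phi B|^2 = I - |phi E|^2, and one point
   with s t <> 0 kills the mixed term 2 Re (phi D^* phi B). *)

Lemma plus_minus_eq (F : numFieldType) (W : lmodType F) (x y z : W) :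
  x + y = z -> x - y = z -> x = z /\ y = 0.
Proof.
move=> xyz xNyz.
have y2 : (2%:R : F) *: y = 0.
  by rewrite scaler_nat mulr2n -(subrr z) -{1}xyz -xNyz opprB addrCA [x + y]addrC addrK.
have y0 : y = 0 by apply/eqP; move: y2 => /eqP; rewrite scaler_eq0 pnatr_eq0.
by rewrite -xyz y0 addr0.
Qed.

Lemma mulmx_reassoc (R : pzRingType) m n p r (A : 'M[R]_(m, n)) (B : 'M[R]_(n, p))
    (AB : 'M[R]_(m, p)) (N : 'M[R]_(p, r)) :
  A *m B = AB -> A *m (B *m N) = AB *m N.
Proof. by move<-; rewrite mulmxA. Qed.

Section Adjoint.
Variable C : numClosedFieldType.
Local Notation adj := (@cmx_adj C _ _).

Lemma cmx_adjM p q r (A : 'M[C]_(p, q)) (B : 'M[C]_(q, r)) :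
  adj (A *m B) = adj B *m adj A.
Proof. by rewrite /cmx_adj map_mxM trmx_mul. Qed.

Lemma cmx_adjD p q (A B : 'M[C]_(p, q)) : adj (A + B) = adj A + adj B.
Proof. by rewrite /cmx_adj map_mxD linearD. Qed.

Lemma cmx_adjN p q (A : 'M[C]_(p, q)) : adj (- A) = - adj A.
Proof. by rewrite /cmx_adj map_mxN linearN. Qed.

Lemma cmx_adjZ p q (a : C) (A : 'M[C]_(p, q)) :
  a \is Num.real -> adj (a *: A) = a *: adj A.
Proof. by move=> ra; rewrite /cmx_adj map_mxZ linearZ /= conj_Creal. Qed.

Lemma cmx_adj0 p q : adj (0 : 'M[C]_(p, q)) = 0.
Proof. by rewrite /cmx_adj map_mx0 trmx0. Qed.

Lemma cmx_adjK p q (A : 'M[C]_(p, q)) : adj (adj A) = A.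
Proof. by apply/matrixP=> i j; rewrite /cmx_adj !mxE conjCK. Qed.

Lemma cmx_adj_row_mx p q r (A : 'M[C]_(p, q)) (B : 'M[C]_(p, r)) :
  adj (row_mx A B) = col_mx (adj A) (adj B).
Proof. by rewrite /cmx_adj map_row_mx tr_row_mx. Qed.

Lemma cmx_adj_block_mx p1 p2 q1 q2 (A : 'M[C]_(p1, q1)) (B : 'M[C]_(p1, q2))
    (D : 'M[C]_(p2, q1)) (E : 'M[C]_(p2, q2)) :
  adj (block_mx A B D E) = block_mx (adj A) (adj D) (adj B) (adj E).
Proof. by rewrite /cmx_adj map_block_mx tr_block_mx. Qed.

Lemma cmx_unitary_row_mx n p q (V : 'M[C]_(n, p)) (T : 'M[C]_(n, q)) :
  cmx_unitary (row_mx V T) ->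
  [/\ adj V *m V = 1%:M, adj V *m T = 0, adj T *m V = 0, adj T *m T = 1%:M
    & V *m adj V + T *m adj T = 1%:M].
Proof.
rewrite /cmx_unitary cmx_adj_row_mx mul_row_col mul_col_row (scalar_mx_block p q).
by case=> VVTT /eq_block_mx[].
Qed.

End Adjoint.

Section QuadraticForm.
Variables (C : numClosedFieldType) (p q : nat).
Local Notation adj := (@cmx_adj C _ _).
Local Notation sqabs := (@cmx_sqabs C p q).

Definition cmx_cross (x y : 'M[C]_(p, q)) : 'M[C]_q := adj x *m y + adj y *m x.

Lemma cmx_Re_adj_mul (x y : 'M[C]_(p, q)) :
  cmx_Re (adj x *m y) = 2^-1 *: cmx_cross x y.
Proof. by rewrite /cmx_Re cmx_adjM cmx_adjK. Qed.

Lemma cmx_sqabsD (x y : 'M[C]_(p, q)) :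
  sqabs (x + y) = sqabs x + sqabs y + cmx_cross x y.
Proof.
rewrite /cmx_sqabs /cmx_cross cmx_adjD mulmxDl !mulmxDr.
by rewrite [adj y *m x + _]addrC addrACA.
Qed.

Lemma cmx_sqabsZ (a : C) (x : 'M[C]_(p, q)) :
  a \is Num.real -> sqabs (a *: x) = a ^+ 2 *: sqabs x.
Proof. by move=> ra; rewrite /cmx_sqabs cmx_adjZ // -scalemxAl -scalemxAr scalerA. Qed.

Lemma cmx_crossDr (x y z : 'M[C]_(p, q)) :
  cmx_cross x (y + z) = cmx_cross x y + cmx_cross x z.
Proof. by rewrite /cmx_cross cmx_adjD mulmxDl mulmxDr addrACA. Qed.

Lemma cmx_crossZl (a : C) (x y : 'M[C]_(p, q)) :
  a \is Num.real -> cmx_cross (a *: x) y = a *: cmx_cross x y.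
Proof. by move=> ra; rewrite /cmx_cross cmx_adjZ // -scalemxAl -scalemxAr scalerDr. Qed.

Lemma cmx_crossZr (a : C) (x y : 'M[C]_(p, q)) :
  a \is Num.real -> cmx_cross x (a *: y) = a *: cmx_cross x y.
Proof. by move=> ra; rewrite /cmx_cross cmx_adjZ // -scalemxAl -scalemxAr scalerDr. Qed.

Lemma cmx_sqabs_lincomb (s t : C) (e d b : 'M[C]_(p, q)) :
  s \is Num.real -> t \is Num.real ->
  sqabs (e + (s *: d + t *: b)) =
    sqabs e + (s ^+ 2 *: sqabs d + t ^+ 2 *: sqabs b + (s * t) *: cmx_cross d b)
    + (s *: cmx_cross e d + t *: cmx_cross e b).
Proof.
move=> rs rt.
by rewrite !cmx_sqabsD !cmx_sqabsZ // cmx_crossDr cmx_crossZl // !cmx_crossZr // scalerA.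
Qed.

Lemma cmx_sqabs_circle (J : 'M[C]_q) (e d b : 'M[C]_(p, q)) :
  (forall s t : C, s \is Num.real -> t \is Num.real -> s ^+ 2 + t ^+ 2 = 1 ->
     sqabs (e + (s *: d + t *: b)) = J) ->
  [/\ sqabs d = J - sqabs e, sqabs b = J - sqabs e & cmx_cross d b = 0].
Proof.
move=> unit_circle.
have r0 : (0 : C) \is Num.real by [].
have r1 : (1 : C) \is Num.real by [].
have rN1 : (-1 : C) \is Num.real by rewrite rpredN.
have on_circle s t : s \is Num.real -> t \is Num.real -> s ^+ 2 + t ^+ 2 = 1 ->
    sqabs e + (s ^+ 2 *: sqabs d + t ^+ 2 *: sqabs b + (s * t) *: cmx_cross d b)
    + (s *: cmx_cross e d + t *: cmx_cross e b) = J.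
  by move=> rs rt st1; rewrite -cmx_sqabs_lincomb // unit_circle.
have [ed1 ed0] : sqabs e + sqabs d = J /\ cmx_cross e d = 0.
  apply: plus_minus_eq.
    have := on_circle 1 0 r1 r0.
    by rewrite expr1n expr0n mulr0 !scale1r !scale0r !addr0; apply.
  have := on_circle (-1) 0 rN1 r0.
  by rewrite sqrrN expr1n expr0n mulr0 scale1r scaleN1r !scale0r !addr0; apply.
have [eb1 eb0] : sqabs e + sqabs b = J /\ cmx_cross e b = 0.
  apply: plus_minus_eq.
    have := on_circle 0 1 r0 r1.
    by rewrite expr1n expr0n mul0r !scale1r !scale0r !add0r !addr0; apply.
  have := on_circle 0 (-1) r0 rN1.
  by rewrite sqrrN expr1n expr0n mul0r scale1r scaleN1r !scale0r !add0r !addr0; apply.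
have sqabs_d : sqabs d = J - sqabs e by rewrite -ed1 addrC addKr.
have sqabs_b : sqabs b = J - sqabs e by rewrite -eb1 addrC addKr.
split=> //.
(* (3/5, 4/5) is a rational point of the circle with [s t != 0] *)
have st1 : (3 / 5 : C) ^+ 2 + (4 / 5) ^+ 2 = 1 by field.
have st0 : (3 / 5 : C) * (4 / 5) != 0 by rewrite !mulf_neq0 ?invr_eq0 ?pnatr_eq0.
have := on_circle _ _ (rpred_div (rpred_nat _ 3) (rpred_nat _ 5))
  (rpred_div (rpred_nat _ 4) (rpred_nat _ 5)) st1.
rewrite ed0 eb0 !scaler0 addr0 sqabs_d sqabs_b -scalerDl st1 scale1r.
rewrite addr0 addrA [e' in e' + _ = _]addrC subrK -[RHS]addr0 => /addrI /eqP.
by rewrite scaler_eq0 (negPf st0) => /eqP.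
Qed.

End QuadraticForm.

Section Hermitian.
Variable C : numClosedFieldType.
Local Notation adj := (@cmx_adj C _ _).

Lemma cmx_hermitian_conj n p (A : 'M[C]_(n, p)) (H : 'M[C]_p) :
  cmx_hermitian H -> cmx_hermitian (A *m H *m adj A).
Proof. by rewrite /cmx_hermitian !cmx_adjM cmx_adjK mulmxA => ->. Qed.

Lemma cmx_hermitianN n (A : 'M[C]_n) : cmx_hermitian A -> cmx_hermitian (- A).
Proof. by rewrite /cmx_hermitian cmx_adjN => ->. Qed.

Lemma mxtrace_conj_isometry n p (A : 'M[C]_(n, p)) (H : 'M[C]_p) :
  adj A *m A = 1%:M -> \tr (A *m H *m adj A) = \tr H.
Proof. by move=> AA; rewrite mxtrace_mulC mulmxA AA mul1mx. Qed.

Lemma cmx_hermitian_block_diag n p (A : 'M[C]_n) (D : 'M[C]_p) :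
  cmx_hermitian A -> cmx_hermitian D -> cmx_hermitian (block_mx A 0 0 D).
Proof. by rewrite /cmx_hermitian cmx_adj_block_mx !cmx_adj0 => -> ->. Qed.

Lemma cmx_hermitian_antidiag n p (R : 'M[C]_(n, p)) :
  cmx_hermitian (block_mx 0 R (adj R) 0).
Proof. by rewrite /cmx_hermitian cmx_adj_block_mx !cmx_adj0 cmx_adjK. Qed.

Lemma cmx_herm0D n (X Y : 'M[C]_n) :
  cmx_herm0 X -> cmx_herm0 Y -> cmx_herm0 (X + Y).
Proof.
by move=> [hX tX] [hY tY]; split; rewrite ?mxtraceD ?tX ?tY ?addr0 // /cmx_hermitian cmx_adjD hX hY.
Qed.

Lemma cmx_herm0Z n (a : C) (X : 'M[C]_n) :
  a \is Num.real -> cmx_herm0 X -> cmx_herm0 (a *: X).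
Proof.
by move=> ra [hX tX]; split; rewrite ?mxtraceZ ?tX ?mulr0 // /cmx_hermitian cmx_adjZ ?hX.
Qed.

Lemma cmx_iherm0_involutive n (X : 'M[C]_n) :
  cmx_herm0 X -> X *m X = 1%:M -> cmx_iherm0 X.
Proof. by move=> [hX tX] XX; do 2?split; rewrite ?hX. Qed.

End Hermitian.

Section BlockPencil.
Variables (C : numClosedFieldType) (n p : nat).
Local Notation adj := (@cmx_adj C _ _).
Variables (H : 'M[C]_p) (K Z : 'M[C]_2) (T : 'M[C]_(n, 2)) (V : 'M[C]_(n, p)).
Hypotheses (hH : cmx_iherm0 H) (hK : cmx_hermitian K /\ cmx_unitary K)
  (hZ : cmx_unitary Z) (hVT : cmx_unitary (row_mx V T)).

Let P := V *m H *m adj V.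
Let Q := T *m K *m adj T.
Let R := T *m Z.
Let S := adj Z *m K *m Z.

Let B : 'M[C]_(n + 2) := block_mx 0 (T *m Z) (adj Z *m adj T) 0.
Let D : 'M[C]_(n + 2) := block_mx (T *m K *m adj T) 0 0 (- (adj Z *m K *m Z)).
Let E : 'M[C]_(n + 2) := block_mx (V *m H *m adj V) 0 0 (0 : 'M[C]_2).

Let VV : adj V *m V = 1%:M. Proof. by case: (cmx_unitary_row_mx hVT). Qed.
Let VT : adj V *m T = 0. Proof. by case: (cmx_unitary_row_mx hVT). Qed.
Let TV : adj T *m V = 0. Proof. by case: (cmx_unitary_row_mx hVT). Qed.
Let TT : adj T *m T = 1%:M. Proof. by case: (cmx_unitary_row_mx hVT). Qed.
Let VVTT : V *m adj V + T *m adj T = 1%:M.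
Proof. by case: (cmx_unitary_row_mx hVT). Qed.
Let HH : H *m H = 1%:M. Proof. by case: hH => [[hermH _] [+ _]]; rewrite hermH. Qed.
Let KK : K *m K = 1%:M. Proof. by case: hK => [hermK [+ _]]; rewrite hermK. Qed.
Let ZZ : Z *m adj Z = 1%:M. Proof. by case: hZ. Qed.
Let ZZ' : adj Z *m Z = 1%:M. Proof. by case: hZ. Qed.

Lemma herm0_pencil_E : cmx_herm0 E.
Proof.
have [[hermH trH] _] := hH.
split; first by apply: cmx_hermitian_block_diag; [exact: cmx_hermitian_conj | exact: cmx_adj0].
by rewrite mxtrace_block mxtrace0 addr0 mxtrace_conj_isometry.
Qed.

Lemma herm0_pencil_D : cmx_herm0 D.
Proof.
have [hermK _] := hK.
rewrite /D; have -> : adj Z *m K *m Z = adj Z *m K *m adj (adj Z) by rewrite cmx_adjK.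
split.
  by apply: cmx_hermitian_block_diag; [|apply: cmx_hermitianN]; exact: cmx_hermitian_conj.
by rewrite mxtrace_block raddfN /= !mxtrace_conj_isometry ?cmx_adjK ?subrr.
Qed.

Lemma herm0_pencil_B : cmx_herm0 B.
Proof.
split; first by rewrite /B -cmx_adjM; exact: cmx_hermitian_antidiag.
by rewrite mxtrace_block !mxtrace0 addr0.
Qed.

Let PP : P *m P = V *m adj V.
Proof. by rewrite /P -!mulmxA (mulmx_reassoc _ VV) mul1mx (mulmx_reassoc _ HH) mul1mx. Qed.
Let QQ : Q *m Q = T *m adj T.
Proof. by rewrite /Q -!mulmxA (mulmx_reassoc _ TT) mul1mx (mulmx_reassoc _ KK) mul1mx. Qed.
Let PQ : P *m Q = 0.
Proof. by rewrite /P /Q -!mulmxA (mulmx_reassoc _ VT) !mul0mx !mulmx0. Qed.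
Let QP : Q *m P = 0.
Proof. by rewrite /P /Q -!mulmxA (mulmx_reassoc _ TV) !mul0mx !mulmx0. Qed.
Let PR : P *m R = 0.
Proof. by rewrite /P /R -!mulmxA (mulmx_reassoc _ VT) !mul0mx !mulmx0. Qed.
Let RP : adj R *m P = 0.
Proof. by rewrite /P /R cmx_adjM -!mulmxA (mulmx_reassoc _ TV) !mul0mx !mulmx0. Qed.
Let RRa : R *m adj R = T *m adj T.
Proof. by rewrite /R cmx_adjM -!mulmxA (mulmx_reassoc _ ZZ) mul1mx. Qed.
Let RR : adj R *m R = 1%:M.
Proof. by rewrite /R cmx_adjM -!mulmxA (mulmx_reassoc _ TT) mul1mx ZZ'. Qed.
Let QR : Q *m R = R *m S.
Proof.
by rewrite /Q /R /S -!mulmxA (mulmx_reassoc _ TT) (mulmx_reassoc _ ZZ) !mul1mx.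
Qed.
Let RQ : adj R *m Q = S *m adj R.
Proof.
by rewrite /Q /R /S cmx_adjM -!mulmxA (mulmx_reassoc _ TT) (mulmx_reassoc _ ZZ) !mul1mx.
Qed.
Let SS : S *m S = 1%:M.
Proof.
by rewrite /S -!mulmxA (mulmx_reassoc _ ZZ) mul1mx (mulmx_reassoc _ KK) mul1mx ZZ'.
Qed.

Lemma pencil_sqr1 (s t : C) :
  s \is Num.real -> t \is Num.real -> s ^+ 2 + t ^+ 2 = 1 ->
  let X := E + (s *: D + t *: B) in X *m X = 1%:M.
Proof.
move=> rs rt st1 X.
have -> : X = block_mx (P + s *: Q) (t *: R) (t *: adj R) (- (s *: S)).
  by rewrite /X /E /D /B -cmx_adjM !scale_block_mx !add_block_mx !scaler0 !addr0 !add0r scalerN.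
rewrite mulmx_block (scalar_mx_block n 2).
rewrite !mulmxDl !mulmxDr !mulmxN !mulNmx -!scalemxAl -!scalemxAr !scalerA.
rewrite PP QQ PQ QP PR RP RRa RR QR RQ SS !scaler0 !addr0 !add0r (mulrC t s) !subrr.
by rewrite -!expr2 -addrA -scalerDl st1 scale1r VVTT opprK -scalerDl addrC st1 scale1r.
Qed.

Lemma iherm0_pencil (s t : C) :
  s \is Num.real -> t \is Num.real -> s ^+ 2 + t ^+ 2 = 1 ->
  cmx_iherm0 (E + (s *: D + t *: B)).
Proof.
move=> rs rt st1; apply: cmx_iherm0_involutive; last exact: pencil_sqr1.
apply: cmx_herm0D; first exact: herm0_pencil_E.
apply: cmx_herm0D; apply: cmx_herm0Z => //.
  exact: herm0_pencil_D.
exact: herm0_pencil_B.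
Qed.

End BlockPencil.

Section RealLinear.
Variables (C : numClosedFieldType) (n m : nat) (phi : 'M[C]_n -> 'M[C]_m).
Hypothesis phi_lin : cmx_real_linear_on_herm0 phi.

Lemma real_linear_herm0D (X Y : 'M[C]_n) :
  cmx_herm0 X -> cmx_herm0 Y -> phi (X + Y) = phi X + phi Y.
Proof. by move=> hX hY; have := phi_lin (rpred1 _) (rpred1 _) hX hY; rewrite !scale1r. Qed.

Lemma real_linear_herm0Z (a : C) (X : 'M[C]_n) :
  a \is Num.real -> cmx_herm0 X -> phi (a *: X) = a *: phi X.
Proof. by move=> ra hX; have := phi_lin ra (rpred0 _) hX hX; rewrite !scale0r !addr0. Qed.

End RealLinear.

Theorem lemma3p9 (R : realType) (k m : nat) (hk : (2 <= k)%N)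
  (phi : 'M[R[i]]_(2 * (k - 1) + 2) -> 'M[R[i]]_m)
  (phi_lin : cmx_real_linear_on_herm0 phi)
  (phi_unit : forall X : 'M[R[i]]_(2 * (k - 1) + 2), cmx_iherm0 X -> cmx_unitary (phi X))
  (H : 'M[R[i]]_(2 * (k - 2))) (K : 'M[R[i]]_2) (Z : 'M[R[i]]_2)
  (T : 'M[R[i]]_(2 * (k - 1), 2)) (V : 'M[R[i]]_(2 * (k - 1), 2 * (k - 2)))
  (hH : cmx_iherm0 H) (hK : cmx_hermitian K /\ cmx_unitary K) (hZ : cmx_unitary Z)
  (hVT : cmx_unitary (row_mx V T)) :
  let B : 'M[R[i]]_(2 * (k - 1) + 2) :=
    block_mx 0 (T *m Z) (cmx_adj Z *m cmx_adj T) 0 in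
  let D : 'M[R[i]]_(2 * (k - 1) + 2) :=
    block_mx (T *m K *m cmx_adj T) 0 0 (- (cmx_adj Z *m K *m Z)) in
  let E : 'M[R[i]]_(2 * (k - 1) + 2) :=
    block_mx (V *m H *m cmx_adj V) 0 0 (0 : 'M[R[i]]_2) in
  [/\ cmx_sqabs (phi B) = cmx_sqabs (phi D),
      cmx_sqabs (phi D) = 1%:M - cmx_sqabs (phi E)
    & cmx_Re (cmx_adj (phi D) *m phi B) = 0].
Proof.
move=> B D E.
have hE : cmx_herm0 E := herm0_pencil_E hH hVT.
have hD : cmx_herm0 D := herm0_pencil_D hK hZ hVT.
have hB : cmx_herm0 B := herm0_pencil_B Z T.
have phi_circle (s t : R[i]) : s \is Num.real -> t \is Num.real -> s ^+ 2 + t ^+ 2 = 1 ->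
    cmx_sqabs (phi E + (s *: phi D + t *: phi B)) = 1%:M.
  move=> rs rt st1; have hsD := cmx_herm0Z rs hD; have htB := cmx_herm0Z rt hB.
  rewrite -(real_linear_herm0Z phi_lin rs hD) -(real_linear_herm0Z phi_lin rt hB).
  rewrite -(real_linear_herm0D phi_lin hsD htB).
  rewrite -(real_linear_herm0D phi_lin hE (cmx_herm0D hsD htB)).
  by case: (phi_unit _ (iherm0_pencil hH hK hZ hVT rs rt st1)).
have [sqabsD sqabsB crossDB] := cmx_sqabs_circle phi_circle.
by rewrite cmx_Re_adj_mul crossDB scaler0 sqabsB sqabsD.
Qed.
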